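(* For every $k\in\mathbb{Z}$, \[ [\alpha_{k+1}^\vee]_q\,\tau_k\,s_ks_{k+1}(\tau_{k+1})+[\alpha_k^\vee]_q\,s_{k+1}s_k(\tau_k)\,\tau_{k+1}=[\alpha_k^\vee+\alpha_{k+1}^\vee]_q\,s_k(\tau_k)\,s_{k+1}(\tau_{k+1}) \] holds in $D(\mathcal{A})$, where $w(\cdot)$ denotes the quantum birational Weyl group action.
   Context: $q$-difference case of type $A^{(1)}_{n-1}$, $n\ge3$: $I=\mathbb{Z}/n\mathbb{Z}$, $a_{ii}=2$, $a_{i,i\pm1}=-1$, $a_{ij}=0$ otherwise, $d_i=1$. $U_-$ is the $\mathbb{C}(q)$-algebra generated by $f_i$ ($i\in I$) with $q$-Serre relations $\sum_{k=0}^{1-a_{ij}}(-1)^kf_i^{(1-a_{ij}-k)}f_jf_i^{(k)}=0$ ($i\ne j$), $f_i^{(k)}=f_i^k/[k]_q!$, $[a]_q=(q^a-q^{-a})/(q-q^{-1})$. $A$ is a quotient of $U_-$ which is an integral domain with images $f_i\ne0$, and $f_i\mapsto f_{i+1}$ defines an algebra automorphism of $A$. $\tilde A=A[f_i^{-1}\mid i\in I]$ is the Ore localization at the multiplicative set generated by the $f_i$. $Q^\vee$ is the free $\mathbb{Z}$-module with basis $\delta^\vee,\epsilon_1^\vee,\dots,\epsilon_n^\vee$; set $\epsilon^\vee_{k+n}=\epsilon^\vee_k-\delta^\vee$ for all $k\in\mathbb{Z}$ and $\alpha_k^\vee=\epsilon_k^\vee-\epsilon_{k+1}^\vee$ (so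 $\alpha^\vee_{k+n}=\alpha^\vee_k$). $P=\mathrm{Hom}(Q^\vee,\mathbb{Z})$ with dual basis $\Lambda_0,\epsilon_1,\dots,\epsilon_n$; $\epsilon_{k+n}=\epsilon_k$; $\varpi_k=\epsilon_1+\dots+\epsilon_k$ for $k\ge0$, extended by $\varpi_{k+n}=\varpi_k+\varpi_n$ for all $k\in\mathbb{Z}$; $\Lambda_k=\Lambda_0+\varpi_k$; $\alpha_k=\epsilon_k-\epsilon_{k+1}$. For $k\in\mathbb{Z}$ write $s_k=s_{\bar k}$, $f_k=f_{\bar k}$, $\alpha_{\bar k}=\alpha_k$, $\alpha^\vee_{\bar k}=\alpha^\vee_k$. The Weyl group $W$ (generated by $s_i$, $i\in I$) acts on $Q^\vee,P$ by $s_i(\beta)=\beta-\langle\beta,\alpha_i\rangle\alpha_i^\vee$, $s_i(\lambda)=\lambda-\langle\alpha_i^\vee,\lambda\rangle\alpha_i$. $\tilde A^{\mathrm{pa}}=\tilde A[q^\beta\mid\beta\in Q^\vee]$ with $q^\beta$ central, $q^\beta q^\gamma=q^{\beta+\gamma}$; $[\beta]_q:=(q^\beta-q^{-\beta})/(q-q^{-1})$ for $\beta\in Q^\vee$. For $\lambda\in P$, $\phi_\lambda$ substitutes $q^\beta\mapsto q^{\langle\beta,\lambda\rangle}$, and $(\phi_\lambda)_\lambda$ identifies $\tilde A^{\mathrm{pa}}$ with a subalgebra of $\tilde A^P$. For an algebra $R$, $D(R^P)$ is generated by $R^P$ and invertible $\tau^\mu$ ($\mu\in P$) with $\tau^\lambda\tau^\mu=\tau^{\lambda+\mu}$,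 $\tau^\mu a=t_\mu(a)\tau^\mu$, $t_\mu((a_\lambda)_\lambda)=(a_{\lambda+\mu})_\lambda$. Fractional powers $f_i^\beta=(f_i^{\langle\beta,\lambda\rangle})_\lambda$. $\mathcal{A}\subset\tilde A^P$ is generated by $\tilde A^{\mathrm{pa}}$ and all $f_i^\beta$; $D(\mathcal{A})$ by $\mathcal{A}$ and all $\tau^\mu$. Tilde action: $\tilde w((a_\lambda)_\lambda)=(a_{w^{-1}(\lambda)})_\lambda$, $\tilde w(\tau^\mu)=\tau^{w(\mu)}$. The quantum birational Weyl group action of $W$ on $D(\mathcal{A})$ is $s_i(x)=f_i^{\alpha_i^\vee}\tilde s_i(x)f_i^{-\alpha_i^\vee}$. The $\tau$-variables are $\tau_k=\tau^{\Lambda_k}$ for $k\in\mathbb{Z}$. *)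

From HB Require Import structures.
From mathcomp Require Import all_boot all_algebra.
From mathcomp Require Import complex fraction Rstruct.
Import GRing.Theory.
Local Open Scope ring_scope.

Definition Cfield : numClosedFieldType := (Rdefinitions.R)[i].
Definition Cq : fieldType := {fraction {poly Cfield}}.
Definition qq : Cq := FracField.tofrac ('X : {poly Cfield}).

Definition qint (m : int) : Cq := (qq ^ m - qq ^ (- m)) / (qq - qq^-1).
Definition qfact (k : nat) : Cq := \prod_(1 <= j < k.+1) qint j%:Z.

(* Cartan matrix of type A^{(1)}_{n-1}, indices I = Z/nZ represented   *)
(* by integers (all data below are n-periodic in the indices).         *)
Definition cartan (n : nat) (i j : int) : int :=
  if ((i - j) %% n)%Z == 0 then 2
  else if (((i - j - 1) %% n)%Z == 0) || (((i - j + 1) %% n)%Z == 0) then -1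
  else 0.

Definition dpow {A : algType Cq} (x : A) (k : nat) : A := (qfact k)^-1 *: x ^+ k.

Definition serre_rel {A : algType Cq} (n : nat) (f : int -> A) (i j : int) : Prop :=
  let d := absz (1 - cartan n i j) in
  \sum_(0 <= k < d.+1) ((-1) ^+ k : Cq) *: (dpow (f i) (d - k) * f j * dpow (f i) k) = 0.

Definition generates {A : algType Cq} (f : int -> A) : Prop :=
  forall S : A -> Prop,
    (forall c : Cq, S c%:A) ->
    (forall x y, S x -> S y -> S (x + y)) ->
    (forall x y, S x -> S y -> S (x * y)) ->
    (forall i, S (f i)) ->
    forall x, S x.

(* Lattices.  P = Hom(Q^vee, Z) is represented by 'rV[int]_(n.+1):     *)
(* coordinate 0 = coefficient of Lambda_0, coordinate j (1<=j<=n) =    *)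
(* coefficient of eps_j.  Q^vee is represented likewise, coordinate 0  *)
(* = coefficient of delta^vee, coordinate j = coefficient of eps^vee_j.*)
(* Since (Lambda_0, eps_1..eps_n) is the dual basis, the pairing is    *)
(* the dot product of coordinates.                                     *)
Definition Pw (n : nat) := 'rV[int]_(n.+1).
Definition Qc (n : nat) := 'rV[int]_(n.+1).

Definition pairing (n : nat) (b : Qc n) (l : Pw n) : int :=
  \sum_(i < n.+1) b 0 i * l 0 i.

Definition Lam0 (n : nat) : Pw n := delta_mx 0 0.
Definition eps (n : nat) (k : int) : Pw n :=
  delta_mx 0 (@inord n (absz ((k - 1) %% n)%Z).+1).
Definition deltav (n : nat) : Qc n := delta_mx 0 0.
(* eps^vee_k, k in Z, with eps^vee_{k+n} = eps^vee_k - delta^vee *)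
Definition epsv (n : nat) (k : int) : Qc n :=
  delta_mx 0 (@inord n (absz ((k - 1) %% n)%Z).+1) - ((k - 1) %/ n)%Z *: deltav n.

(* varpi_m = eps_1 + ... + eps_m (m >= 0); varpi_{k+n} = varpi_k + varpi_n *)
Definition varpi_nat (n : nat) (m : nat) : Pw n := \sum_(1 <= j < m.+1) eps n j%:Z.
Definition varpi (n : nat) (k : int) : Pw n :=
  varpi_nat n (absz (k %% n)%Z) + (k %/ n)%Z *: varpi_nat n n.
Definition Lam (n : nat) (k : int) : Pw n := Lam0 n + varpi n k.

Definition alpha (n : nat) (k : int) : Pw n := eps n k - eps n (k + 1).
Definition alphav (n : nat) (k : int) : Qc n := epsv n k - epsv n (k + 1).

Definition sP (n : nat) (k : int) (l : Pw n) : Pw n :=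
  l - pairing n (alphav n k) l *: alpha n k.

(* D(R^P): the algebra generated by R^P and tau^mu (mu in P) with      *)
(* tau^mu a = t_mu(a) tau^mu.  An element is a finite sum of monomials *)
(* a tau^mu, represented by a list of pairs (a, mu); two lists denote  *)
(* the same element iff their coefficients at every tau^nu agree.      *)
Section Diff.
Variables (n : nat) (R : pzRingType).

Definition fam := Pw n -> R.
Definition Dop := seq (fam * Pw n)%type.

Definition tshift (mu : Pw n) (a : fam) : fam := fun l => a (l + mu).

Definition dcoef (x : Dop) (nu : Pw n) : fam :=
  fun l => \sum_(m <- x | m.2 == nu) m.1 l.

Definition deq (x y : Dop) : Prop := forall nu l, dcoef x nu l = dcoef y nu l.

Definition dadd (x y : Dop) : Dop := x ++ y.
(* (a tau^mu)(b tau^nu) = a t_mu(b) tau^(mu+nu) *)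
Definition dmul (x y : Dop) : Dop :=
  [seq ((fun l => m.1 l * tshift m.2 p.1 l), m.2 + p.2) | m <- x, p <- y].
Definition dfam (a : fam) : Dop := [:: (a, 0)].
Definition dtau (mu : Pw n) : Dop := [:: ((fun _ => 1), mu)].

Definition dtilde (w winv : Pw n -> Pw n) (x : Dop) : Dop :=
  [seq ((fun l => m.1 (winv l)), w m.2) | m <- x].
End Diff.
Arguments tshift {n R}.
Arguments dcoef {n R}.
Arguments deq {n R}.
Arguments dadd {n R}.
Arguments dmul {n R}.
Arguments dfam {n R}.
Arguments dtau {n} R.
Arguments dtilde {n R}.

Definition fpow {n : nat} {R : unitRingType} (x : R) (b : Qc n) : fam n R :=
  fun l => x ^ pairing n b l.

(* quantum birational action of s_k: x |-> f_k^{alpha_k^vee} s~_k(x) f_k^{-alpha_k^vee}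
   (s_k is an involution, so s_k^{-1} = s_k in the tilde action) *)
Definition sq {n : nat} {R : unitRingType} (F : int -> R) (k : int) (x : Dop n R) : Dop n R :=
  dmul (dmul (dfam (fpow (F k) (alphav n k))) (dtilde (sP n k) (sP n k) x))
       (dfam (fpow (F k) (- alphav n k))).

Definition dq {n : nat} (R : algType Cq) (b : Qc n) : Dop n R :=
  dfam (fun l : Pw n => (qint (pairing n b l))%:A).

Definition tauk (n : nat) (R : pzRingType) (k : int) : Dop n R := dtau R (Lam n k).

From HB Require Import structures.
From mathcomp Require Import all_boot all_algebra.
From mathcomp Require Import complex fraction Rstruct.
From mathcomp Require Import ring zify.
Import GRing.Theory.
Local Open Scope ring_scope.

Set Implicit Arguments.
Unset Strict Implicit.

(* All three terms are multiples of the single monomial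
   tau^(Lambda_k + Lambda_(k+1) - alpha_k - alpha_(k+1)), so the identity is one between
   coefficient functions of lambda.  Applying s_i to a monomial with constant coefficient c
   and weight mu with <alpha_i^v, mu> = 1 yields the coefficient f_i^m c f_i^(1-m), where
   m = <alpha_i^v, lambda>.  The q-Serre relation says exactly that
   m |-> f_i^m f_j f_i^(1-m) satisfies the three-term recurrence of the q-integers, hence
   equals [m] f_i f_j - [m-1] f_j f_i; after this substitution the identity is the
   addition formula [p][m+1] - [m][p-1] = [m+p]. *)

Section QNumbers.
Variables (K : fieldType) (q : K).

Definition qnum (m : int) : K := (q ^ m - q ^ (- m)) / (q - q^-1).

Hypothesis q_subV : q - q^-1 != 0.

Lemma q_neq0 : q != 0.
Proof. by apply: contraNneq q_subV => ->; rewrite invr0 subr0. Qed.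

Lemma qsqrB1_neq0 : q * q - 1 != 0.
Proof. by rewrite -[1](mulfV q_neq0) -mulrBr mulf_neq0 ?q_neq0. Qed.

Lemma qnumE m : qnum m = (q ^ m - (q ^ m)^-1) / (q - q^-1).
Proof. by rewrite /qnum invr_expz. Qed.

Lemma qnum0 : qnum 0 = 0.
Proof. by rewrite qnumE expr0z invr1 subrr mul0r. Qed.

Lemma qnum1 : qnum 1 = 1.
Proof. by rewrite qnumE expr1z divff. Qed.

Lemma qnumN1 : qnum (-1) = -1.
Proof. by rewrite qnumE exprN1 invrK -opprB mulNr divff. Qed.

Lemma qnum2 : qnum 2 = (q ^+ 2 + 1) / q.
Proof. by rewrite qnumE; field; rewrite q_neq0 qsqrB1_neq0. Qed.

Lemma qnum_rec m : qnum (m + 2) = qnum 2 * qnum (m + 1) - qnum m.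
Proof.
have q0 := q_neq0; have qm0 := expfz_neq0 m q0.
rewrite !qnumE (expfzDr m 2 q0) (expfzDr m 1 q0) expr1z.
by field; rewrite q0 qm0 qsqrB1_neq0.
Qed.

Lemma qnum_add m p : qnum p * qnum (m + 1) - qnum m * qnum (p - 1) = qnum (m + p).
Proof.
have q0 := q_neq0; have qm0 := expfz_neq0 m q0; have qp0 := expfz_neq0 p q0.
rewrite !qnumE (expfzDr m 1 q0) (expfzDr p (-1) q0) (expfzDr m p q0) expr1z exprN1.
by field; rewrite q0 qm0 qp0 qsqrB1_neq0.
Qed.

End QNumbers.

Lemma subrACA (V : zmodType) (x y z t : V) : x - y - (z - t) = x - z - (y - t).
Proof. by rewrite !opprB addrACA [RHS]addrACA [- z + _]addrC. Qed.

Lemma qnum_recurrence (K : fieldType) (q : K) (V : lmodType K) (g : int -> V) :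
  q - q^-1 != 0 ->
  (forall m, g (m + 2) = qnum q 2 *: g (m + 1) - g m) ->
  forall m, g m = qnum q m *: g 1 - qnum q (m - 1) *: g 0.
Proof.
move=> q_subV g_rec.
pose c m := qnum q m *: g 1 - qnum q (m - 1) *: g 0.
have c_rec m : c (m + 2) = qnum q 2 *: c (m + 1) - c m.
  rewrite /c scalerBr !scalerA subrACA -!scalerBl -!(qnum_rec q_subV).
  have -> : m + 1 - 1 = m - 1 + 1 by lia.
  have -> : m + 2 - 1 = m - 1 + 2 by lia.
  by rewrite -(qnum_rec q_subV).
have g0 : g 0 = c 0 by rewrite /c qnum0 (qnumN1 q_subV) scale0r sub0r scaleN1r opprK.
have g1 : g 1 = c 1 by rewrite /c (qnum1 q_subV) subrr qnum0 scale1r scale0r subr0.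
suff gc m : g m = c m /\ g (m + 1) = c (m + 1) by move=> m; case: (gc m).
elim/int_rect: m => [|k [gk gk1]|k [gk gk1]]; first by rewrite add0r.
  have -> : (k.+1 : int) = k%:Z + 1 by lia.
  by rewrite -addrA g_rec c_rec gk gk1.
set m := - (k.+1 : int).
have e1 : m + 1 = - k%:Z by rewrite /m; lia.
have e2 : m + 2 = - k%:Z + 1 by rewrite /m; lia.
have := g_rec m; have := c_rec m; rewrite e1 e2 gk gk1 => ec eg; split=> //.
by apply: (subrI (qnum q 2 *: c (- k%:Z))); rewrite -eg -ec.
Qed.

Definition qconj (R : unitRingType) (a b : R) (m : int) : R := a ^ m * b * a ^ (1 - m).

Definition qserre (K : fieldType) (q : K) (R : lalgType K) (a b : R) : Prop :=
  a * a * b - qnum q 2 *: (a * b * a) + b * a * a = 0.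

Lemma qserre_rmorph (K : fieldType) (q : K) (A B : lalgType K)
    (g : {lrmorphism A -> B}) (x y : A) :
  qserre q x y -> qserre q (g x) (g y).
Proof. by rewrite /qserre -!rmorphM -linearZ -rmorphB -rmorphD => ->; rewrite rmorph0. Qed.

Lemma qconj_id (R : unitRingType) (a : R) m : a \is a GRing.unit -> qconj a 1 m = a.
Proof. by move=> a_unit; rewrite /qconj mulr1 -exprzDr // addrC subrK expr1z. Qed.

Section QSerre.
Variables (K : fieldType) (q : K) (R : unitAlgType K) (a b : R).
Hypothesis a_unit : a \is a GRing.unit.

Lemma qconj0 : qconj a b 0 = b * a.
Proof. by rewrite /qconj expr0z mul1r subr0 expr1z. Qed.

Lemma qconj1 : qconj a b 1 = a * b.
Proof. by rewrite /qconj expr1z subrr expr0z mulr1. Qed.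

Lemma qconj2 : qconj a b 2 = a * a * b / a.
Proof. by rewrite /qconj (_ : 1 - 2 = -1) // exprN1 -exprnP expr2. Qed.

Lemma qconjD m k : qconj a b (m + k) = a ^ m * qconj a b k * a ^ (- m).
Proof.
rewrite /qconj (exprzDr a_unit) (_ : 1 - (m + k) = (1 - k) + - m); last by lia.
by rewrite (exprzDr a_unit) !mulrA.
Qed.

Lemma qconj_rec : qserre q a b ->
  forall m, qconj a b (m + 2) = qnum q 2 *: qconj a b (m + 1) - qconj a b m.
Proof.
rewrite /qserre => serre m.
have serre_a : qconj a b 2 = qnum q 2 *: qconj a b 1 - qconj a b 0.
  apply: subr0_eq; rewrite opprB addrCA addrC qconj0 qconj1 qconj2.
  by rewrite -[RHS](mul0r a^-1) -serre mulrDl mulrBl -scalerAl !(mulrK a_unit).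
rewrite (qconjD m 2) (qconjD m 1) serre_a mulrBr mulrBl -scalerAr -scalerAl.
by rewrite -!qconjD addr0.
Qed.

End QSerre.

Lemma qconjE (K : fieldType) (q : K) (R : unitAlgType K) (a b : R) :
  q - q^-1 != 0 -> a \is a GRing.unit -> qserre q a b ->
  forall m, qconj a b m = qnum q m *: (a * b) - qnum q (m - 1) *: (b * a).
Proof.
move=> q_subV a_unit serre m.
by rewrite (qnum_recurrence q_subV (qconj_rec a_unit serre)) qconj1 qconj0.
Qed.

Lemma qconj_exchange (K : fieldType) (q : K) (R : unitAlgType K) (a b : R) :
  q - q^-1 != 0 -> a \is a GRing.unit -> b \is a GRing.unit ->
  qserre q a b -> qserre q b a ->
  forall m p, qnum q p *: qconj a b (m + 1) + qnum q m *: qconj b a p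
              = qnum q (m + p) *: (a * b).
Proof.
move=> q_subV a_unit b_unit serre_ab serre_ba m p.
rewrite (qconjE q_subV a_unit serre_ab) (qconjE q_subV b_unit serre_ba).
rewrite addrK !scalerBr !scalerA [qnum q m * qnum q p]mulrC subrKA -scalerBl.
by rewrite qnum_add.
Qed.

Lemma polyX2DC_neq0 (R : nzRingType) (c : R) : 'X^2 + c%:P != 0 :> {poly R}.
Proof.
apply/eqP => /(congr1 (fun p : {poly R} => p`_2)).
by rewrite coefD coefXn coefC coef0 addr0 => /eqP; rewrite oner_eq0.
Qed.

Lemma qq_neq0 : qq != 0.
Proof. by rewrite /qq tofrac_eq0 polyX_eq0. Qed.

Lemma qq_expr2B1_neq0 : qq ^+ 2 - 1 != 0.
Proof. by rewrite /qq -tofracXn -tofrac1 -tofracB tofrac_eq0 -polyCN polyX2DC_neq0. Qed.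

Lemma qq_expr2D1_neq0 : qq ^+ 2 + 1 != 0.
Proof. by rewrite /qq -tofracXn -tofrac1 -tofracD tofrac_eq0 polyX2DC_neq0. Qed.

Lemma qq_subV_neq0 : qq - qq^-1 != 0.
Proof.
apply: contraNneq qq_expr2B1_neq0 => qq_subV0.
by rewrite expr2 -[1](mulfV qq_neq0) -mulrBr qq_subV0 mulr0.
Qed.

Lemma qintE m : qint m = qnum qq m.
Proof. by []. Qed.

Lemma qint2_neq0 : qint 2 != 0.
Proof.
rewrite qintE (qnum2 qq_subV_neq0).
exact: mulf_neq0 qq_expr2D1_neq0 (invr_neq0 qq_neq0).
Qed.

Lemma qfact0 : qfact 0 = 1.
Proof. by rewrite /qfact big_geq. Qed.

Lemma qfact1 : qfact 1 = 1.
Proof. by rewrite /qfact big_nat1 qintE (qnum1 qq_subV_neq0). Qed.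

Lemma qfact2 : qfact 2 = qint 2.
Proof. by rewrite /qfact big_nat_recr //= big_nat1 qintE (qnum1 qq_subV_neq0) mul1r. Qed.

Lemma qserre_of_serre_rel (A : algType Cq) n (f : int -> A) i j :
  cartan n i j = -1 -> serre_rel n f i j -> qserre qq (f i) (f j).
Proof.
rewrite /serre_rel => ->; rewrite (_ : absz (1 - (-1) : int) = 2%N) //.
rewrite !big_nat_recl // big_geq // addr0 /dpow qfact0 qfact1 qfact2 !invr1 !scale1r.
rewrite subn0 (_ : (2 - 1)%N = 1%N) // !expr0 !expr1 !mulr1 !mul1r !expr2.
rewrite mulN1r opprK scale1r scaleN1r -scalerAl -scalerAr !mulrA.
move/(congr1 (fun y => qint 2 *: y)); rewrite scaler0 !scalerDr scalerN !scalerA.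
by rewrite (mulfV qint2_neq0) !scale1r addrA.
Qed.

Definition kron (n : nat) (x : int) : int := (n %| x)%Z%:R.

Section Lattice.
Variable n : nat.
Implicit Types (b : Qc n) (l : Pw n) (i j k x y : int).

Lemma pairingDl b1 b2 l : pairing n (b1 + b2) l = pairing n b1 l + pairing n b2 l.
Proof. by rewrite /pairing -big_split; apply: eq_bigr => i _; rewrite mxE mulrDl. Qed.

Lemma pairingNl b l : pairing n (- b) l = - pairing n b l.
Proof. by rewrite /pairing -sumrN; apply: eq_bigr => i _; rewrite mxE mulNr. Qed.

Lemma pairingBl b1 b2 l : pairing n (b1 - b2) l = pairing n b1 l - pairing n b2 l.
Proof. by rewrite pairingDl pairingNl. Qed.

Lemma pairingZl (c : int) b l : pairing n (c *: b) l = c * pairing n b l.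
Proof. by rewrite /pairing mulr_sumr; apply: eq_bigr => i _; rewrite mxE mulrA. Qed.

Lemma pairing0r b : pairing n b 0 = 0.
Proof. by rewrite /pairing big1 // => i _; rewrite mxE mulr0. Qed.

Lemma pairingDr b l1 l2 : pairing n b (l1 + l2) = pairing n b l1 + pairing n b l2.
Proof. by rewrite /pairing -big_split; apply: eq_bigr => i _; rewrite mxE mulrDr. Qed.

Lemma pairingBr b l1 l2 : pairing n b (l1 - l2) = pairing n b l1 - pairing n b l2.
Proof. by rewrite /pairing -sumrB; apply: eq_bigr => i _; rewrite !mxE mulrBr. Qed.

Lemma pairingZr b (c : int) l : pairing n b (c *: l) = c * pairing n b l.
Proof. by rewrite /pairing mulr_sumr; apply: eq_bigr => i _; rewrite mxE mulrCA. Qed.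

Lemma pairing_delta b (i : 'I_n.+1) : pairing n b (delta_mx 0 i) = b 0 i.
Proof.
rewrite /pairing (bigD1 i) //= big1 => [|j /negbTE ji]; first by rewrite mxE !eqxx mulr1 addr0.
by rewrite mxE ji andbF mulr0.
Qed.

Lemma modz_eq0_dvd x : ((x %% n)%Z == 0) = (n %| x)%Z.
Proof. exact/eqP/dvdz_mod0P. Qed.

Hypothesis n_gt0 : (0 < n)%N.

Lemma divzMD_small x (r : int) : (0 <= r < n%:Z)%R -> ((x * n + r) %/ n)%Z = x.
Proof. by move=> r_small; rewrite divzMDl ?divz_small ?addr0 //; lia. Qed.

Lemma kronDM x y : kron n (x + y * n) = kron n x.
Proof. by rewrite /kron rpredDr // dvdz_mull ?dvdzz. Qed.

Lemma divz_sub1 x : (x %/ n)%Z - ((x - 1) %/ n)%Z = kron n x.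
Proof.
have [r_ge0 r_lt] : (0 <= (x %% n)%Z)%R /\ ((x %% n)%Z < n)%R.
  by split; [apply: modz_ge0 | apply: ltz_pmod]; lia.
have xE := divz_eq x n.
rewrite /kron -modz_eq0_dvd; case: eqP => [r0 | r_neq0].
  by rewrite (_ : x - 1 = ((x %/ n)%Z - 1) * n + (n%:Z - 1)) ?divzMD_small; lia.
by rewrite (_ : x - 1 = (x %/ n)%Z * n + ((x %% n)%Z - 1)) ?divzMD_small; lia.
Qed.

Definition eps_index k : 'I_n.+1 := inord (absz ((k - 1) %% n)%Z).+1.

Lemma eps_indexE k : nat_of_ord (eps_index k) = (absz ((k - 1) %% n)%Z).+1.
Proof.
rewrite /eps_index inordK // ltnS.
have : ((k - 1) %% n < n)%Z by apply: ltz_pmod; lia.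
have : (0 <= (k - 1) %% n)%Z by apply: modz_ge0; lia.
lia.
Qed.

Lemma eps_index_eq0 k : (eps_index k == 0) = false.
Proof. by apply/negbTE/eqP => /(congr1 val); rewrite /= eps_indexE. Qed.

Lemma eps_index_eq j i : (eps_index j == eps_index i) = (n %| j - i)%Z.
Proof.
rewrite -(inj_eq val_inj) /= !eps_indexE eqSS.
rewrite (_ : j - i = (j - 1) - (i - 1)); last by lia.
rewrite -eqz_mod_dvd.
have : (0 <= (j - 1) %% n)%Z by apply: modz_ge0; lia.
have : (0 <= (i - 1) %% n)%Z by apply: modz_ge0; lia.
set a := ((j - 1) %% n)%Z; set c := ((i - 1) %% n)%Z.
by move=> c_ge0 a_ge0; apply/eqP/eqP; lia.
Qed.

Lemma pairing_epsv_eps j i : pairing n (epsv n j) (eps n i) = kron n (j - i).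
Proof.
rewrite /epsv /eps pairingBl pairingZl /deltav !pairing_delta !mxE eqxx /=.
by rewrite -/(eps_index i) -/(eps_index j) eps_index_eq0 eq_sym eps_index_eq mulr0 subr0.
Qed.

Lemma pairing_epsv_Lam0 j : pairing n (epsv n j) (Lam0 n) = - ((j - 1) %/ n)%Z.
Proof.
rewrite /Lam0 pairing_delta /epsv /deltav !mxE eqxx /=.
by rewrite -/(eps_index j) eq_sym eps_index_eq0 mulr1 sub0r.
Qed.

Lemma pairing_alphav_eps j i :
  pairing n (alphav n j) (eps n i) = kron n (j - i) - kron n (j + 1 - i).
Proof. by rewrite /alphav pairingBl !pairing_epsv_eps. Qed.

Lemma pairing_alphav_varpi_nat j m :
  pairing n (alphav n j) (varpi_nat n m) = kron n (j - m%:Z) - kron n j.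
Proof.
elim: m => [|m IH]; first by rewrite /varpi_nat big_geq // pairing0r subr0 subrr.
rewrite /varpi_nat big_nat_recr //= pairingDr -/(varpi_nat n m) IH pairing_alphav_eps.
rewrite (_ : j + 1 - m.+1%:Z = j - m%:Z); last by lia.
by rewrite addrC subrKA.
Qed.

Lemma pairing_alphav_Lam0 j : pairing n (alphav n j) (Lam0 n) = kron n j.
Proof.
rewrite /alphav pairingBl !pairing_epsv_Lam0 opprK addrC.
by rewrite (_ : j + 1 - 1 = j) ?divz_sub1; lia.
Qed.

Lemma pairing_alphav_Lam j k : pairing n (alphav n j) (Lam n k) = kron n (j - k).
Proof.
rewrite /Lam /varpi !pairingDr pairingZr !pairing_alphav_varpi_nat pairing_alphav_Lam0.
have -> : kron n (j - n%:Z) = kron n j by rewrite -(kronDM j (-1)) mulN1r.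
rewrite subrr mulr0 addr0 addrC subrK -(kronDM (j - k) (k %/ n)%Z).
have kE := divz_eq k n; have : (0 <= k %% n)%Z by apply: modz_ge0; lia.
by set r := (k %% n)%Z; set d := (k %/ n)%Z => r_ge0; congr kron; lia.
Qed.

End Lattice.

Section Cartan.
Variable n : nat.
Hypothesis n_ge3 : (3 <= n)%N.
Implicit Types i j k x : int.

Let n_gt0 : (0 < n)%N := leq_trans (isT : 0 < 3)%N n_ge3.

Lemma dvdz_smallF (c : int) : (0 < `|c| < n)%N -> (n %| c)%Z = false.
Proof. by case/andP=> c_gt0 c_lt; rewrite dvdzE /= gtnNdvd. Qed.

Lemma dvdz1F : (n %| 1)%Z = false.
Proof. by rewrite dvdz_smallF //=; lia. Qed.

Lemma dvdzN1F : (n %| -1)%Z = false.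
Proof. by rewrite dvdz_smallF //=; lia. Qed.

Lemma dvdz2F : (n %| 2)%Z = false.
Proof. by rewrite dvdz_smallF //=; lia. Qed.

Lemma cartanE j i : cartan n j i =
  if (n %| j - i)%Z then 2 else if (n %| j - i - 1)%Z || (n %| j - i + 1)%Z then -1 else 0.
Proof. by rewrite /cartan !modz_eq0_dvd. Qed.

Lemma cartan_diag k : cartan n k k = 2.
Proof. by rewrite cartanE subrr dvdz0. Qed.

Lemma cartan_succr k : cartan n k (k + 1) = -1.
Proof.
rewrite cartanE (_ : k - (k + 1) = -1); last by lia.
by rewrite dvdzN1F addNr dvdz0 orbT.
Qed.

Lemma cartan_succl k : cartan n (k + 1) k = -1.
Proof.
rewrite cartanE (_ : k + 1 - k = 1); last by lia.
by rewrite dvdz1F subrr dvdz0.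
Qed.

Lemma pairing_alphav_alpha j i : pairing n (alphav n j) (alpha n i) = cartan n j i.
Proof.
rewrite /alpha pairingBr !(pairing_alphav_eps n_gt0) cartanE /kron.
have -> : j + 1 - i = j - i + 1 by lia.
have -> : j - (i + 1) = j - i - 1 by lia.
have -> : j + 1 - (i + 1) = j - i by lia.
set x := j - i; case d0: (n %| x)%Z.
  by rewrite (rpredDl _ d0) (rpredDl _ d0) dvdz1F dvdzN1F.
case dm: (n %| x - 1)%Z.
  have -> : x + 1 = x - 1 + 2 by lia.
  by rewrite (rpredDl _ dm) dvdz2F.
by case: (n %| x + 1)%Z.
Qed.

Lemma pairing_alphav_Lam_diag k : pairing n (alphav n k) (Lam n k) = 1.
Proof. by rewrite (pairing_alphav_Lam n_gt0) subrr /kron dvdz0. Qed.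

Lemma pairing_alphav_Lam_succr k : pairing n (alphav n k) (Lam n (k + 1)) = 0.
Proof.
rewrite (pairing_alphav_Lam n_gt0) (_ : k - (k + 1) = -1); last by lia.
by rewrite /kron dvdzN1F.
Qed.

Lemma pairing_alphav_Lam_succl k : pairing n (alphav n (k + 1)) (Lam n k) = 0.
Proof.
rewrite (pairing_alphav_Lam n_gt0) (_ : k + 1 - k = 1); last by lia.
by rewrite /kron dvdz1F.
Qed.

End Cartan.

Definition wrefl n (u : Qc n) (al : Pw n) (l : Pw n) : Pw n := l - pairing n u l *: al.

Definition qrefl n (R : unitRingType) (a : R) (u : Qc n) (al : Pw n) (x : Dop n R) :
  Dop n R :=
  dmul (dmul (dfam (fpow a u)) (dtilde (wrefl u al) (wrefl u al) x)) (dfam (fpow a (- u))).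

Lemma sqE n (R : unitRingType) (F : int -> R) k (x : Dop n R) :
  sq F k x = qrefl (F k) (alphav n k) (alpha n k) x.
Proof. by []. Qed.

(* [x] is the single term c tau^mu; the coefficient is only determined pointwise, which is
   all that [deq] sees and avoids functional extensionality. *)
Definition monomial n (R : pzRingType) (x : Dop n R) (c : fam n R) (mu : Pw n) : Prop :=
  exists2 c', x = [:: (c', mu)] & c' =1 c.

Section Monomials.
Variables (n : nat) (R : pzRingType).
Implicit Types (x y z : Dop n R) (c d e : fam n R) (mu nu rho : Pw n).

Lemma monomial_tau mu : monomial (dtau R mu) (fun=> 1) mu.
Proof. by exists (fun=> 1). Qed.

Lemma monomial_fam c : monomial (dfam c) c 0.
Proof. by exists c. Qed.

Lemma monomial_eq x c d mu nu : monomial x c mu -> c =1 d -> mu = nu -> monomial x d nu.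
Proof. by case=> c' -> c'c cd <-; exists c' => // l; rewrite c'c cd. Qed.

Lemma monomial_mul x y c d mu nu : monomial x c mu -> monomial y d nu ->
  monomial (dmul x y) (fun l => c l * d (l + mu)) (mu + nu).
Proof.
case=> c' -> c'c [d' -> d'd].
by exists (fun l => c' l * d' (l + mu)) => // l; rewrite c'c d'd.
Qed.

Lemma monomial_tilde (w winv : Pw n -> Pw n) x c mu : monomial x c mu ->
  monomial (dtilde w winv x) (fun l => c (winv l)) (w mu).
Proof. by case=> c' -> c'c; exists (fun l => c' (winv l)) => // l; rewrite c'c. Qed.

Lemma deq_monomialD x y z c d e mu nu rho :
  monomial x c mu -> monomial y d nu -> monomial z e rho -> mu = rho -> nu = rho ->
  (forall l, c l + d l = e l) -> deq (dadd x y) z.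
Proof.
case=> c' -> c'c [d' -> d'd] [e' -> e'e] -> -> cde nu' l.
rewrite /dcoef /dadd /= !big_cons !big_nil /=.
by case: eqP => _; rewrite ?addr0 // c'c d'd e'e.
Qed.

End Monomials.

Section Reflections.
Variables (n : nat) (R : unitRingType).

Lemma monomial_qrefl (a : R) u al x c mu : monomial x c mu ->
  monomial (qrefl a u al x)
    (fun l => a ^ pairing n u l * c (wrefl u al l) * a ^ (- pairing n u (l + wrefl u al mu)))
    (wrefl u al mu).
Proof.
move=> xc; apply: monomial_eq (monomial_mul (monomial_mul (monomial_fam _)
                                (monomial_tilde _ _ xc)) (monomial_fam _)) _ _ => [l|].
  by rewrite /fpow addr0 add0r pairingNl.
by rewrite add0r addr0.
Qed.

Lemma monomial_qrefl_const (a c : R) u al x mu :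
  pairing n u al = 2 -> pairing n u mu = 1 -> monomial x (fun=> c) mu ->
  monomial (qrefl a u al x) (fun l => qconj a c (pairing n u l)) (mu - al).
Proof.
move=> ual umu xc.
have smu : wrefl u al mu = mu - al by rewrite /wrefl umu scale1r.
apply: monomial_eq (monomial_qrefl a u al xc) _ (smu) => l.
by rewrite /qconj smu pairingDr pairingBr umu ual; congr (_ * _ ^ _); lia.
Qed.

Lemma monomial_qrefl_tau (a : R) u al mu :
  a \is a GRing.unit -> pairing n u al = 2 -> pairing n u mu = 1 ->
  monomial (qrefl a u al (dtau R mu)) (fun=> a) (mu - al).
Proof.
move=> a_unit ual umu.
apply: monomial_eq (monomial_qrefl_const a ual umu (monomial_tau _ _)) _ erefl => l.
exact: qconj_id.
Qed.

End Reflections.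

Section RankTwo.
Variables (n : nat) (At : unitAlgType Cq) (a b : At) (u v : Qc n) (al be L M : Pw n).
Hypotheses (a_unit : a \is a GRing.unit) (b_unit : b \is a GRing.unit).
Hypotheses (serre_ab : qserre qq a b) (serre_ba : qserre qq b a).
Hypotheses (ual : pairing n u al = 2) (ube : pairing n u be = -1)
           (val : pairing n v al = -1) (vbe : pairing n v be = 2).
Hypotheses (uL : pairing n u L = 1) (vL : pairing n v L = 0)
           (uM : pairing n u M = 0) (vM : pairing n v M = 1).

Lemma qrefl_A2_identity :
  deq (dadd (dmul (dmul (dq At v) (dtau At L)) (qrefl a u al (qrefl b v be (dtau At M))))
            (dmul (dmul (dq At u) (qrefl b v be (qrefl a u al (dtau At L)))) (dtau At M)))
      (dmul (dmul (dq At (u + v)) (qrefl a u al (dtau At L))) (qrefl b v be (dtau At M))).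
Proof.
have tL := monomial_qrefl_tau a_unit ual uL.
have tM := monomial_qrefl_tau b_unit vbe vM.
have uMbe : pairing n u (M - be) = 1 by rewrite pairingBr uM ube.
have vLal : pairing n v (L - al) = 1 by rewrite pairingBr vL val.
have tMa := monomial_qrefl_const a ual uMbe tM.
have tLb := monomial_qrefl_const b vbe vLal tL.
apply: (deq_monomialD
  (monomial_mul (monomial_mul (monomial_fam _) (monomial_tau _ _)) tMa)
  (monomial_mul (monomial_mul (monomial_fam _) tLb) (monomial_tau _ _))
  (monomial_mul (monomial_mul (monomial_fam _) tL) tM)) => [||l].
- by apply/rowP => i; rewrite !mxE; lia.
- by apply/rowP => i; rewrite !mxE; lia.
rewrite addr0 add0r !mulr1 pairingDr uL pairingDl !mulr_algl -scalerAl.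
exact: qconj_exchange qq_subV_neq0 a_unit b_unit serre_ab serre_ba _ _.
Qed.

End RankTwo.

(* Only the q-Serre relations and the invertibility of the [iota (f i)] are needed. *)
Theorem mainTheorem6 (n : nat) (hn : (3 <= n)%N)
  (A : algType Cq) (f : int -> A)
  (f_per : forall i : int, f (i + n%:Z) = f i)
  (f_nz : forall i : int, f i != 0)
  (f_serre : forall i j : int, ((i - j) %% n)%Z != 0 -> serre_rel n f i j)
  (f_gen : generates f)
  (A_dom : (1 : A) != 0 /\ (forall x y : A, x * y = 0 -> x = 0 \/ y = 0))
  (sigma : {lrmorphism A -> A}) (sigma_bij : bijective sigma)
  (sigma_f : forall i : int, sigma (f i) = f (i + 1))
  (At : unitAlgType Cq) (iota : {lrmorphism A -> At})
  (iota_inj : injective iota)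
  (iota_unit : forall i : int, iota (f i) \is a GRing.unit)
  (iota_frac : forall x : At, exists (a : A) (s : seq int),
      x = iota a * (iota (\prod_(i <- s) f i))^-1)
  (k : int) :
  let F := fun i : int => iota (f i) in
  deq
    (dadd
       (dmul (dmul (dq At (alphav n (k + 1))) (tauk n At k))
             (sq F k (sq F (k + 1) (tauk n At (k + 1)))))
       (dmul (dmul (dq At (alphav n k)) (sq F (k + 1) (sq F k (tauk n At k))))
             (tauk n At (k + 1))))
    (dmul (dmul (dq At (alphav n k + alphav n (k + 1))) (sq F k (tauk n At k)))
          (sq F (k + 1) (tauk n At (k + 1)))).
Proof.
move=> F; rewrite !sqE /tauk.
have serre_F i j : cartan n i j = -1 -> qserre qq (F i) (F j).
  move=> cij; apply/qserre_rmorph/(qserre_of_serre_rel cij)/f_serre.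
  by move: cij; rewrite /cartan; case: eqP.
apply: (qrefl_A2_identity (iota_unit k) (iota_unit (k + 1))
  (serre_F _ _ (cartan_succr hn k)) (serre_F _ _ (cartan_succl hn k)));
  by rewrite ?(pairing_alphav_alpha hn) ?cartan_diag ?cartan_succr ?cartan_succl
             ?pairing_alphav_Lam_diag ?pairing_alphav_Lam_succr ?pairing_alphav_Lam_succl.
Qed.
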